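(* Let $T$ be an $n\times n$ complex matrix with distinct eigenvalues $\lambda_1,\dots,\lambda_n$. Let $u_1,\dots,u_n$ be unit eigenvectors of $T$ with $Tu_i=\lambda_iu_i$, let $v_1,\dots,v_n$ be unit eigenvectors of $T^*$ with $T^*v_i=\overline{\lambda_i}v_i$, and let $U=(u_1|u_2|\cdots|u_n)$ and $V=(v_1|v_2|\cdots|v_n)$ be the matrices with these vectors as columns. If $T$ is unitarily equivalent to a complex symmetric matrix, then $U^*U$ and $V^*V$ have the same eigenvalues, repeated according to multiplicity.
   Context: A complex symmetric matrix is a square complex matrix $S$ with $S=S^t$. Two matrices $A,B\in M_n(\mathbb{C})$ are unitarily equivalent if $A=W^*BW$ for some unitary $W$. *)

(* Complex numbers: an arbitrary numClosedFieldType C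
   (e.g. algC, or R[i] for R : realType), with conjugation Num.conj. *)
From HB Require Import structures.
From mathcomp Require Import all_boot all_order all_algebra.
Set Implicit Arguments. Unset Strict Implicit. Unset Printing Implicit Defensive.
Import Order.TTheory GRing.Theory Num.Theory.
Local Open Scope ring_scope.

Definition mxadj (C : numClosedFieldType) (m n : nat) (A : 'M[C]_(m, n))
  : 'M[C]_(n, m) := (map_mx Num.conj A)^T.

Definition unitary_mx (C : numClosedFieldType) (n : nat) (W : 'M[C]_n) : Prop :=
  mxadj W *m W = 1%:M.

Definition csymmetric (C : numClosedFieldType) (n : nat) (S : 'M[C]_n) : Prop :=
  S^T = S.

Definition unitarily_equiv (C : numClosedFieldType) (n : nat) (A B : 'M[C]_n) : Prop :=
  exists W : 'M[C]_n, unitary_mx W /\ A = mxadj W *m B *m W.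

Definition unit_col (C : numClosedFieldType) (n : nat) (U : 'M[C]_n) (j : 'I_n) : Prop :=
  \sum_(k < n) `|U k j| ^+ 2 = 1.

(* Write T = W^* S W with S = S^t and W unitary, and let J x := W^* conj (W x).
   J is conjugate-linear, conjugates inner products, and, because S^* = conj S,
   intertwines T with T^*: it maps eigenvectors of T for lambda to eigenvectors
   of T^* for conj lambda.  The eigenvalues being distinct, the eigenspaces of
   T^* are lines, so J u_i = a_i v_i with |a_i| = 1.  Taking inner products,
   (V^* V)_ij = a_i (U^* U)_ji conj a_j, i.e. V^* V is similar to (U^* U)^t
   through a diagonal unitary matrix. *)

From mathcomp Require Import all_boot all_order all_algebra.
From mathcomp Require Import zify.
Import Order.TTheory GRing.Theory Num.Theory.
Local Open Scope ring_scope.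
Set Implicit Arguments. Unset Strict Implicit.

Section CharPoly.
Variable R : comNzRingType.

Lemma char_poly_similar n (A P Q : 'M[R]_n) :
  Q *m P = 1%:M -> char_poly (P *m A *m Q) = char_poly A.
Proof.
move=> QP; have PQ := mulmx1C QP; rewrite /char_poly.
have -> : char_poly_mx (P *m A *m Q) =
    map_mx polyC P *m char_poly_mx A *m map_mx polyC Q.
  rewrite /char_poly_mx mulmxBr mulmxBl !map_mxM; congr (_ - _).
  by rewrite scalar_mxC -mulmxA -map_mxM PQ map_mx1 mulmx1.
by rewrite !det_mulmx mulrC mulrA -det_mulmx -map_mxM QP map_mx1 det1 mul1r.
Qed.

Lemma char_poly_trmx n (A : 'M[R]_n) : char_poly A^T = char_poly A.
Proof.
rewrite /char_poly -det_tr; congr (\det _).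
by apply/matrixP=> i j; rewrite !mxE eq_sym.
Qed.

Lemma char_poly_diag_similar n (A B : 'M[R]_n) (d e : 'I_n -> R) :
  (forall i, e i * d i = 1) -> (forall i j, B i j = d i * A i j * e j) ->
  char_poly B = char_poly A.
Proof.
move=> ed B_entry.
rewrite -(@char_poly_similar _ A (diag_mx (\row_i d i)) (diag_mx (\row_i e i))).
  by congr char_poly; apply/matrixP=> i j; rewrite mul_mx_diag mul_diag_mx !mxE B_entry.
apply/matrixP=> i j; rewrite mul_diag_mx !mxE.
by case: eqVneq => [->|_]; rewrite ?mulr1n ?mulr0n ?mulr0 // ed.
Qed.

End CharPoly.

Lemma sum_gt0_leq_card_eq1 (I : finType) (r : I -> nat) :
  (\sum_i r i <= #|I|)%N -> (forall i, 0 < r i)%N -> forall i, r i = 1%N.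
Proof.
move=> le_sum r_gt0 i.
have rest : (#|I|.-1 <= \sum_(j | j != i) r j)%N.
  by rewrite -(cardC1 i) -sum1_card; apply: leq_sum => j _; exact: r_gt0.
have I_gt0 : (0 < #|I|)%N by apply/card_gt0P; exists i.
move: le_sum rest; rewrite (bigD1 i) //=.
move: (\sum_(j | j != i) r j) => s; have := r_gt0 i; lia.
Qed.

Section Eigenspaces.
Variables (F : fieldType) (n : nat).
Implicit Types (A g : 'M[F]_n).

Lemma eigenspace_rank1 g (mu : 'I_n -> F) (w : 'I_n -> 'rV[F]_n) :
  injective mu -> (forall i, w i != 0) -> (forall i, w i *m g = mu i *: w i) ->
  forall i, \rank (eigenspace g (mu i)) = 1%N.
Proof.
move=> mu_inj w_nz w_eig; apply: sum_gt0_leq_card_eq1.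
  have := mxdirect_sum_eigenspace g (P := predT) (a_ := mu) (in2W mu_inj).
  by rewrite mxdirectE /= => /eqP <-; rewrite card_ord rank_leq_col.
move=> i; apply: leq_trans _ (mxrankS (introT eigenspaceP (w_eig i))).
by rewrite lt0n mxrank_eq0.
Qed.

Lemma col_eigenvectorP A (x : 'cV[F]_n) a :
  reflect (A *m x = a *: x) (x^T <= eigenspace A^T a)%MS.
Proof.
apply: (iffP eigenspaceP) => [e|e]; last by rewrite -trmx_mul e linearZ.
by apply: trmx_inj; rewrite trmx_mul linearZ.
Qed.

Lemma eigenvector_col_scalar A (mu : 'I_n -> F) (X : 'M[F]_n) :
  injective mu -> (forall i, col i X != 0) ->
  (forall i, A *m col i X = mu i *: col i X) ->
  forall i x, A *m x = mu i *: x -> exists c, x = c *: col i X.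
Proof.
move=> mu_inj X_nz X_eig i x /col_eigenvectorP x_eig.
have Xt_nz j : (col j X)^T != 0 by rewrite trmx_eq0.
have Xt_eig j : ((col j X)^T <= eigenspace A^T (mu j))%MS.
  exact/col_eigenvectorP/X_eig.
have rk1 := eigenspace_rank1 mu_inj Xt_nz (fun j => elimT eigenspaceP (Xt_eig j)).
have := (mxrank_leqif_eq (Xt_eig i)).2; rewrite rk1 rank_rV Xt_nz eqxx.
move=> /esym/andP[_ eig_sub].
have /sub_rVP[c xc] := submx_trans x_eig eig_sub.
by exists c; apply: trmx_inj; rewrite xc linearZ.
Qed.

End Eigenspaces.

Section Adjoint.
Variable C : numClosedFieldType.

Lemma mxadjM m n p (A : 'M[C]_(m, n)) (B : 'M[C]_(n, p)) :
  mxadj (A *m B) = mxadj B *m mxadj A.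
Proof. by rewrite /mxadj map_mxM trmx_mul. Qed.

Lemma mxadjK m n (A : 'M[C]_(m, n)) : mxadj (mxadj A) = A.
Proof. by apply/matrixP=> i j; rewrite /mxadj !mxE conjCK. Qed.

Lemma mxadjZ m n (a : C) (A : 'M[C]_(m, n)) :
  mxadj (a *: A) = a^* *: mxadj A.
Proof. by apply/matrixP=> i j; rewrite /mxadj !mxE rmorphM. Qed.

Lemma mxadj_conj m n (A : 'M[C]_(m, n)) :
  mxadj (map_mx Num.conj A) = map_mx Num.conj (mxadj A).
Proof. by apply/matrixP=> i j; rewrite /mxadj !mxE. Qed.

Lemma mxadj_mulmxE m n p (A : 'M[C]_(m, n)) (B : 'M[C]_(m, p)) i j :
  (mxadj A *m B) i j = (mxadj (col i A) *m col j B) 0 0.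
Proof. by rewrite !mxE; apply: eq_bigr => k _; rewrite !mxE. Qed.

Lemma gram_mx_conj m n (A : 'M[C]_(m, n)) i j :
  (mxadj A *m A) j i = ((mxadj A *m A) i j)^*.
Proof.
rewrite !mxE rmorph_sum; apply: eq_bigr => k _.
by rewrite /mxadj !mxE rmorphM /= conjCK mulrC.
Qed.

Lemma unit_col_dot n (U : 'M[C]_n) i :
  unit_col U i -> (mxadj (col i U) *m col i U) 0 0 = 1.
Proof.
rewrite /unit_col => <-; rewrite !mxE.
by apply: eq_bigr => k _; rewrite !mxE normCKC.
Qed.

Lemma unit_col_neq0 n (U : 'M[C]_n) i : unit_col U i -> col i U != 0.
Proof.
move=> /unit_col_dot dot1; apply: contra_eqN dot1 => /eqP->.
by rewrite mulmx0 mxE eq_sym oner_eq0.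
Qed.

End Adjoint.

Section UnitaryConjugation.
Variables (C : numClosedFieldType) (n : nat) (W : 'M[C]_n).

Definition unitary_conjugation (x : 'cV[C]_n) : 'cV[C]_n :=
  mxadj W *m map_mx Num.conj (W *m x).

Lemma unitary_conjugationZ a x :
  unitary_conjugation (a *: x) = a^* *: unitary_conjugation x.
Proof. by rewrite /unitary_conjugation -scalemxAr map_mxZ scalemxAr. Qed.

Hypothesis W_unitary : unitary_mx W.

Let W_coisometry : W *m mxadj W = 1%:M := mulmx1C W_unitary.

Lemma unitary_conjugation_dot x y :
  mxadj (unitary_conjugation x) *m unitary_conjugation y =
  map_mx Num.conj (mxadj x *m y).
Proof.
rewrite /unitary_conjugation mxadjM mxadjK -mulmxA (mulmxA W) W_coisometry mul1mx.
have -> : mxadj x *m y = mxadj (W *m x) *m (W *m y).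
  by rewrite mxadjM mulmxA -(mulmxA _ (mxadj W)) W_unitary mulmx1.
by rewrite [RHS]map_mxM -mxadj_conj.
Qed.

Lemma unitary_conjugation_intertwines (S : 'M[C]_n) x : csymmetric S ->
  mxadj (mxadj W *m S *m W) *m unitary_conjugation x =
  unitary_conjugation (mxadj W *m S *m W *m x).
Proof.
move=> S_sym.
have adjS : mxadj S = map_mx Num.conj S by rewrite /mxadj map_trmx S_sym.
rewrite /unitary_conjugation !mxadjM mxadjK adjS -!mulmxA (mulmxA W) W_coisometry.
rewrite mul1mx.
by rewrite -map_mxM !mulmxA W_coisometry mul1mx.
Qed.

Lemma gram_mx_unitary_conjugation (U V : 'M[C]_n) (a : 'I_n -> C) :
  (forall i, unitary_conjugation (col i U) = a i *: col i V) ->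
  forall i j, (a i)^* * a j * (mxadj V *m V) i j = ((mxadj U *m U) i j)^*.
Proof.
move=> JU i j; rewrite (mxadj_mulmxE V) (mxadj_mulmxE U).
have := unitary_conjugation_dot (col i U) (col j U).
rewrite !JU mxadjZ -scalemxAl -scalemxAr scalerA => /matrixP/(_ 0 0).
by rewrite [LHS]mxE [RHS]mxE.
Qed.

End UnitaryConjugation.

Theorem corollary1 (C : numClosedFieldType) (n : nat) (T U V : 'M[C]_n)
    (lambda : 'I_n -> C) :
  injective lambda ->
  (forall i : 'I_n, unit_col U i /\ T *m col i U = lambda i *: col i U) ->
  (forall i : 'I_n, unit_col V i /\
     mxadj T *m col i V = Num.conj (lambda i) *: col i V) ->
  (exists S : 'M[C]_n, csymmetric S /\ unitarily_equiv T S) ->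
  char_poly (mxadj U *m U) = char_poly (mxadj V *m V).
Proof.
move=> lambda_inj U_eig V_eig [S [S_sym [W [W_unitary T_eq]]]]; subst T.
have conj_lambda_inj : injective (fun i => (lambda i)^*).
  by move=> i j /(can_inj conjCK); apply: lambda_inj.
have /fin_all_exists[a Ju] i :
    exists c, unitary_conjugation W (col i U) = c *: col i V.
  apply: (eigenvector_col_scalar conj_lambda_inj) => [j|j|].
  - exact: unit_col_neq0 (V_eig j).1.
  - exact: (V_eig j).2.
  by rewrite unitary_conjugation_intertwines // (U_eig i).2 unitary_conjugationZ.
have gram_relation := gram_mx_unitary_conjugation W_unitary Ju.
have a_unimodular i : (a i)^* * a i = 1.
  have := gram_relation i i.
  rewrite (mxadj_mulmxE V) (mxadj_mulmxE U) !unit_col_dot ?mulr1 ?rmorph1 //.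
  - exact: (U_eig i).1.
  - exact: (V_eig i).1.
rewrite -(char_poly_trmx (mxadj U *m U)).
apply/esym/(char_poly_diag_similar (d := a) (e := fun j => (a j)^*)) => // i j.
rewrite [_^T i j]mxE (gram_mx_conj U i j) -gram_relation !mulrA [a i * _]mulrC.
by rewrite a_unimodular mul1r mulrAC [a j * _]mulrC a_unimodular mul1r.
Qed.
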